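(* Consider Algorithm FoBa-obj with parameter $\delta$. Let $s$ be a positive integer such that $$(s-\bar k)>(\bar k+1)\left[\left(\sqrt{\frac{\rho_+(s)}{\rho_-(s)}}+1\right)\frac{2\rho_+(1)}{\rho_-(s)}\right]^2,$$ and take $\delta>\frac{4\rho_+(1)}{\rho_-(s)^2}\|\nabla Q(\bar\beta)\|_\infty^2$. Then the algorithm terminates at some $k\le s-\bar k$.
   Context: Let $Q:\mathbb{R}^d\to\mathbb{R}$ be convex and continuously differentiable. $e_j$ is the $j$-th standard basis vector, $\mathrm{supp}(\beta)=\{j:\beta_j\ne0\}$, $\|\beta\|_0=|\mathrm{supp}(\beta)|$, $\|\cdot\|$ is the Euclidean norm, $A-B$ is set difference, and $v_S$ is $v$ restricted to the coordinates in $S$. For $F\subseteq\{1,\dots,d\}$, $\hat\beta(F)$ denotes a minimizer of $Q$ over $\{\beta:\mathrm{supp}(\beta)\subseteq F\}$ (assumed to exist). For a positive integer $s$, the restricted strong convexity constants $\rho_-(s),\rho_+(s)>0$ are constants such that for all $\beta,\beta'\in\mathbb{R}^d$ with $\|\beta'-\beta\|_0\le s$: $\frac{\rho_-(s)}{2}\|\beta'-\beta\|^2\le Q(\beta')-Q(\beta)-\langle\nabla Q(\beta),\beta'-\beta\rangle\le\frac{\rho_+(s)}{2}\|\beta'-\beta\|^2.$ $\bar\beta$ is a solution of $\min_\beta Q(\beta)$ subject to $\|\beta\|_0\le\bar k$, $\bar F=\mathrm{supp}(\bar\beta)$ and $\bar k=|\bar F|$. Algorithm FoBa has two variants: FoBa-obj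 (parameter $\delta>0$) and FoBa-gdt (parameter $\epsilon>0$). Initialize $F^{(0)}=\emptyset$, $\beta^{(0)}=0$, $k=0$, and repeat the following iteration. (1) Stopping test: FoBa-obj stops if $Q(\beta^{(k)})-\min_{\alpha\in\mathbb{R},\,j\notin F^{(k)}}Q(\beta^{(k)}+\alpha e_j)<\delta$; FoBa-gdt stops if $\|\nabla Q(\beta^{(k)})\|_\infty<\epsilon$. On stopping the output is $\beta^{(k)}$ with support $F^{(k)}$, and the algorithm is said to terminate at $k$. (2) Forward step: FoBa-obj picks $i^{(k)}\in\arg\min_{i\notin F^{(k)}}\min_\alpha Q(\beta^{(k)}+\alpha e_i)$; FoBa-gdt picks $i^{(k)}\in\arg\max_{i\notin F^{(k)}}|\nabla Q(\beta^{(k)})_i|$. Set $F^{(k+1)}=F^{(k)}\cup\{i^{(k)}\}$, $\beta^{(k+1)}=\hat\beta(F^{(k+1)})$, $\delta^{(k+1)}=Q(\beta^{(k)})-Q(\beta^{(k+1)})$, $k\leftarrow k+1$. (3) Backward step: repeat — if $F^{(k)}=\emptyset$ or $\min_{i\in F^{(k)}}Q(\beta^{(k)}-\beta^{(k)}_ie_i)-Q(\beta^{(k)})\ge\delta^{(k)}/2$, leave the backward step; otherwise pick $j\in\arg\min_{i\in F^{(k)}}Q(\beta^{(k)}-\beta^{(k)}_ie_i)$, set $F^{(k-1)}=F^{(k)}-\{j\}$, $\beta^{(k-1)}=\hat\beta(F^{(k-1)})$, $k\leftarrow k-1$ (where $\delta^{(k-1)}$ is the value recorded at the most recent forward step producing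 index $k-1$). Thus $|F^{(k)}|=k$ always. ''At the beginning of an iteration'' means the state just before a stopping test. *)

From Stdlib Require Import Reals.
From mathcomp Require Import all_boot.

Set Implicit Arguments.
Unset Strict Implicit.
Unset Printing Implicit Defensive.

Local Open Scope R_scope.

Definition vec (d : nat) := 'I_d -> R.

Definition vadd d (x y : vec d) : vec d := fun i => x i + y i.
Definition vsub d (x y : vec d) : vec d := fun i => x i - y i.
Definition vscale d (a : R) (x : vec d) : vec d := fun i => a * x i.
Definition vzero d : vec d := fun _ => 0.

Definition ej d (j : 'I_d) : vec d := fun i => if i == j then 1 else 0.

Definition inner d (x y : vec d) : R := \big[Rplus/0]_(i < d) (x i * y i).
Definition sqnorm d (x : vec d) : R := inner x x.
Definition norm d (x : vec d) : R := sqrt (sqnorm x).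
Definition infnorm d (x : vec d) : R := \big[Rmax/0]_(i < d) Rabs (x i).

Definition nzb (x : R) : bool := if Req_EM_T x 0 then false else true.
Definition supp d (x : vec d) : {set 'I_d} := [set i | nzb (x i)].
Definition l0 d (x : vec d) : nat := #|supp x|.

Definition convex d (Q : vec d -> R) : Prop :=
  forall (x y : vec d) (t : R), 0 <= t <= 1 ->
    Q (vadd (vscale t x) (vscale (1 - t) y)) <= t * Q x + (1 - t) * Q y.

(* grad is the gradient of Q: every directional derivative at x in direction v
   exists and equals <grad x, v>, and grad is continuous; in finite dimension
   this is exactly continuous differentiability with gradient grad. *)
Definition is_C1_with_grad d (Q : vec d -> R) (grad : vec d -> vec d) : Prop :=
  (forall (x v : vec d),
      derivable_pt_lim (fun t => Q (vadd x (vscale t v))) 0 (inner (grad x) v)) /\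
  (forall (x : vec d) (eps : R), 0 < eps -> exists eta, 0 < eta /\
      forall y : vec d, norm (vsub y x) < eta -> norm (vsub (grad y) (grad x)) < eps).

Definition RSC d (Q : vec d -> R) (grad : vec d -> vec d) (s : nat) (rm rp : R) : Prop :=
  0 < rm /\ 0 < rp /\
  forall (b b' : vec d), (l0 (vsub b' b) <= s)%N ->
    rm / 2 * sqnorm (vsub b' b) <= Q b' - Q b - inner (grad b) (vsub b' b) /\
    Q b' - Q b - inner (grad b) (vsub b' b) <= rp / 2 * sqnorm (vsub b' b).

Definition is_hat d (Q : vec d -> R) (F : {set 'I_d}) (b : vec d) : Prop :=
  (forall j, j \notin F -> b j = 0) /\
  forall b' : vec d, (forall j, j \notin F -> b' j = 0) -> Q b <= Q b'.

(* State of FoBa at the beginning of an iteration: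
   F = F^(k), beta = beta^(k), ds = [:: delta^(k); delta^(k-1); ...; delta^(1)]
   (the values recorded at the most recent forward step producing each index). *)
Record state (d : nat) := mkState {
  stF : {set 'I_d};
  stbeta : vec d;
  stds : seq R
}.

Definition init_state d : state d := mkState set0 (@vzero d) [::].

Definition plus_coord d (b : vec d) (a : R) (j : 'I_d) : vec d :=
  vadd b (vscale a (ej j)).

(* The min is realised by an explicit minimiser (j0, a0); if every coordinate is
   already in F the min over the empty set is +infinity and the test holds. *)
Definition stop_obj d (Q : vec d -> R) (delta : R) (st : state d) : Prop :=
  let F := stF st in let b := stbeta st in
  (forall j : 'I_d, j \in F) \/
  exists (j0 : 'I_d) (a0 : R),
    j0 \notin F /\
    (forall (j : 'I_d) (a : R), j \notin F -> Q (plus_coord b a0 j0) <= Q (plus_coord b a j)) /\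
    Q b - Q (plus_coord b a0 j0) < delta.

Definition fwd_obj d (Q : vec d -> R) (st st' : state d) : Prop :=
  let F := stF st in let b := stbeta st in
  exists (i : 'I_d) (ai : R),
    i \notin F /\
    (forall (j : 'I_d) (a : R), j \notin F -> Q (plus_coord b ai i) <= Q (plus_coord b a j)) /\
    stF st' = i |: F /\
    is_hat Q (stF st') (stbeta st') /\
    stds st' = (Q b - Q (stbeta st')) :: stds st.

Definition Qdrop d (Q : vec d -> R) (b : vec d) (i : 'I_d) : R :=
  Q (plus_coord b (- b i) i).

Inductive bwd d (Q : vec d -> R) : state d -> state d -> Prop :=
| bwd_leave : forall st : state d,
    (stF st = set0 \/
     forall i, i \in stF st -> Qdrop Q (stbeta st) i - Q (stbeta st) >= head 0 (stds st) / 2) ->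
    bwd Q st st
| bwd_remove : forall (st st' st'' : state d) (j : 'I_d),
    stF st != set0 ->
    (exists i, i \in stF st /\ Qdrop Q (stbeta st) i - Q (stbeta st) < head 0 (stds st) / 2) ->
    j \in stF st ->
    (forall i, i \in stF st -> Qdrop Q (stbeta st) j <= Qdrop Q (stbeta st) i) ->
    stF st' = stF st :\ j ->
    is_hat Q (stF st') (stbeta st') ->
    stds st' = behead (stds st) ->
    bwd Q st' st'' ->
    bwd Q st st''.

Definition iter_obj d (Q : vec d -> R) (st st'' : state d) : Prop :=
  exists st', fwd_obj Q st st' /\ bwd Q st' st''.

Definition foba_obj_run d (Q : vec d -> R) (delta : R) (tr : nat -> state d) : Prop :=
  tr 0%N = init_state d /\
  forall t : nat, ~ stop_obj Q delta (tr t) -> iter_obj Q (tr t) (tr t.+1).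

(* The analysis follows the states of the algorithm at the beginning of each
   iteration and maintains the invariant [within_budget]: the state is well
   formed (its vector is the restricted minimiser of its support and every
   recorded forward gain is at least [delta]), the backward loop has exited,
   and [#|F| + kb < s].

   - Each iteration lowers the potential [Q(beta) + (sum of gains)/2] by at
     least [delta/2] (a forward gain is at least [delta] since the stopping
     test failed; each backward removal costs less than half of the gain it
     forgets), and the potential is bounded below by [min Q].  Hence the run
     stops ([first_stop]).
   - The budget is preserved ([forward_within_budget]): when the backward
     loop removes nothing, all coordinates of the old and new minimisers are
     large (restricted smoothness along coordinates), the gradient of the
     sparse optimum is small (threshold on [delta]), and two applications of
     restricted strong convexity at level [s] ([missed_mass_bound],
     [new_mass_bound]) bound the number of new coordinates outside the
     optimal support; the hypothesis on [s] closes the arithmetic. *)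
From HB Require Import structures.
From Stdlib Require Import Reals Lra Psatz Wf_nat FunctionalExtensionality Classical.
From mathcomp Require Import all_boot zify.
Local Open Scope R_scope.

Lemma RplusA : associative Rplus. Proof. by move=> x y z; ring. Qed.
Lemma RplusC : commutative Rplus. Proof. by move=> x y; ring. Qed.
Lemma Rplus0 : left_id 0 Rplus. Proof. by move=> x; ring. Qed.
HB.instance Definition _ := Monoid.isComLaw.Build R 0 Rplus RplusA RplusC Rplus0.

Lemma rsum_le {d} {f g : 'I_d -> R} :
  (forall i, f i <= g i) -> \big[Rplus/0]_(i < d) f i <= \big[Rplus/0]_(i < d) g i.
Proof. by move=> H; apply: (big_ind2 (fun x y => x <= y)) => // *; lra. Qed.

Lemma rsumD {d} (f g : 'I_d -> R) :
  \big[Rplus/0]_(i < d) (f i + g i) = \big[Rplus/0]_(i < d) f i + \big[Rplus/0]_(i < d) g i.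
Proof. exact: big_split. Qed.

Lemma rsumZ {d} c (f : 'I_d -> R) : \big[Rplus/0]_(i < d) (c * f i) = c * \big[Rplus/0]_(i < d) f i.
Proof. by elim/big_rec2: _ => [|i x y _ ->]; ring. Qed.

Lemma rsumB {d} (f g : 'I_d -> R) :
  \big[Rplus/0]_(i < d) (f i - g i) = \big[Rplus/0]_(i < d) f i - \big[Rplus/0]_(i < d) g i.
Proof. by elim/big_rec3: _ => [|i x y z _ ->]; ring. Qed.

Lemma rsum_indicator {d} (A : {set 'I_d}) c :
  \big[Rplus/0]_(i < d) (if i \in A then c else 0) = INR #|A| * c.
Proof.
rewrite -big_mkcond big_const /=; elim: #|A| => [|n IH] /=; first by ring.
by rewrite IH; case: n {IH} => [|n] /=; ring.
Qed.

Definition supported {d} (b : vec d) (F : {set 'I_d}) : Prop :=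
  forall j, j \notin F -> b j = 0.

Lemma supported_supp {d} (b : vec d) : supported b (supp b).
Proof. by move=> j; rewrite inE /nzb; case: Req_EM_T. Qed.

Lemma l0_supported {d} {b : vec d} {A : {set 'I_d}} : supported b A -> (l0 b <= #|A|)%N.
Proof.
move=> Hb; apply: subset_leq_card; apply/subsetP => j; rewrite inE.
by apply: contraLR => /Hb ->; rewrite /nzb; case: Req_EM_T.
Qed.

Lemma l0_vsub {d} {x y : vec d} {A B : {set 'I_d}} :
  supported x A -> supported y B -> (l0 (vsub x y) <= #|A :|: B|)%N.
Proof.
move=> Hx Hy; apply: l0_supported => j; rewrite in_setU negb_or => /andP [jA jB].
by rewrite /vsub Hx // Hy //; ring.
Qed.

Lemma hat_supported {d} {Q : vec d -> R} {F b} : is_hat Q F b -> supported b F.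
Proof. by case. Qed.

Lemma hat_min {d} {Q : vec d -> R} {F b b'} : is_hat Q F b -> supported b' F -> Q b <= Q b'.
Proof. by case=> _; apply. Qed.

Lemma plus_coord_supported {d} {b : vec d} {F} :
  supported b F -> forall t i, supported (plus_coord b t i) (i |: F).
Proof.
move=> Hb t i j; rewrite in_setU1 negb_or => /andP [ji jF].
by rewrite /plus_coord /vadd /vscale /ej (negbTE ji) Hb //; ring.
Qed.

Lemma plus_coord_in {d} {b : vec d} {F i} :
  supported b F -> i \in F -> forall t, supported (plus_coord b t i) F.
Proof.
move=> Hb iF t j jF; apply: (plus_coord_supported Hb t i j).
by rewrite in_setU1 negb_or jF andbT; apply: contraNneq jF => ->.
Qed.

Lemma drop_supported {d} {b : vec d} {F} :
  supported b F -> forall i, supported (plus_coord b (- b i) i) (F :\ i).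
Proof.
move=> Hb i j; rewrite /plus_coord /vadd /vscale /ej.
case: (eqVneq j i) => [-> _|ji]; first by ring.
by rewrite in_setD1 ji /= => /Hb ->; ring.
Qed.

Lemma inner_coord {d} (g b : vec d) a i :
  inner g (vsub (plus_coord b a i) b) = a * g i.
Proof.
rewrite /inner (bigD1 i) //= big1 => [|j /negbTE hj];
  rewrite /vsub /plus_coord /vadd /vscale /ej ?eqxx ?hj /=; ring.
Qed.

Lemma sqnorm_coord {d} (b : vec d) a i : sqnorm (vsub (plus_coord b a i) b) = a * a.
Proof. by rewrite /sqnorm inner_coord /vsub /plus_coord /vadd /vscale /ej eqxx; ring. Qed.

Lemma l0_coord {d} (b : vec d) a i : (l0 (vsub (plus_coord b a i) b) <= 1)%N.
Proof.
rewrite -(cards1 i); apply: l0_supported => j; rewrite inE => /negbTE hj.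
by rewrite /vsub /plus_coord /vadd /vscale /ej hj; ring.
Qed.

Lemma infnorm_ge {d} (x : vec d) i : Rabs (x i) <= infnorm x.
Proof.
rewrite /infnorm; have : i \in index_enum 'I_d by rewrite mem_index_enum.
elim: (index_enum 'I_d) => //= j r IH; rewrite in_cons big_cons.
case/orP => [/eqP <-|/IH h]; first exact: Rmax_l.
exact: Rle_trans h (Rmax_r _ _).
Qed.

Section CoordinateSmoothness.
Context {d : nat} {Q : vec d -> R} {grad : vec d -> vec d} {rm1 rp1 : R}.
Hypothesis HR1 : RSC Q grad 1 rm1 rp1.

Let rp1_gt0 : 0 < rp1. Proof. by case: HR1 => _ []. Qed.

Lemma coord_smooth b a i : Q (plus_coord b a i) <= Q b + a * grad b i + rp1 / 2 * (a * a).
Proof.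
case: HR1 => _ [_ H]; have [_] := H b (plus_coord b a i) (l0_coord b a i).
rewrite inner_coord sqnorm_coord; lra.
Qed.

Lemma coord_descent b i :
  Q (plus_coord b (- grad b i / rp1) i) <= Q b - grad b i * grad b i / (2 * rp1).
Proof.
have h := coord_smooth b (- grad b i / rp1) i.
have e : - grad b i / rp1 * grad b i + rp1 / 2 * (- grad b i / rp1 * (- grad b i / rp1))
        = - (grad b i * grad b i / (2 * rp1)) by field; lra.
lra.
Qed.

Lemma coord_gain_bound b i G :
  (forall t, Q b - Q (plus_coord b t i) <= G) -> grad b i * grad b i <= 2 * rp1 * G.
Proof.
move=> HG; have h1 := HG (- grad b i / rp1); have h2 := coord_descent b i.
have e : grad b i * grad b i = 2 * rp1 * (grad b i * grad b i / (2 * rp1)) by field; lra.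
rewrite e; apply: Rmult_le_compat_l; lra.
Qed.

Lemma coord_min_grad0 b i : (forall t, Q b <= Q (plus_coord b t i)) -> grad b i = 0.
Proof.
move=> Hmin; have : grad b i * grad b i <= 2 * rp1 * 0.
  by apply: coord_gain_bound => t; have := Hmin t; lra.
rewrite Rmult_0_r => h; nra.
Qed.

Lemma drop_cost {b i} : grad b i = 0 -> Qdrop Q b i - Q b <= rp1 / 2 * (b i * b i).
Proof. by move=> g0; have := coord_smooth b (- b i) i; rewrite /Qdrop g0; nra. Qed.

Lemma hat_grad0 {F b} : is_hat Q F b -> forall i, i \in F -> grad b i = 0.
Proof.
move=> Hb i iF; apply: coord_min_grad0 => t; apply: (hat_min Hb).
exact: plus_coord_in (hat_supported Hb) iF t.
Qed.

Lemma sparse_opt_grad0 {bb} :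
  (forall b : vec d, (l0 b <= l0 bb)%N -> Q bb <= Q b) -> forall i, i \in supp bb -> grad bb i = 0.
Proof.
move=> Hbar i iF; apply: coord_min_grad0 => t; apply: Hbar.
exact: l0_supported (plus_coord_in (supported_supp bb) iF t).
Qed.

Lemma costly_drop_large {F b j h} :
  is_hat Q F b -> j \in F -> Qdrop Q b j - Q b >= h / 2 -> h <= rp1 * (b j * b j).
Proof. by move=> Hb jF hj; have := drop_cost (hat_grad0 Hb j jF); lra. Qed.

End CoordinateSmoothness.

Lemma cross_bound {g y r p delta} : 0 < r -> 0 < p ->
  4 * (g * g) * p < r * r * delta -> delta <= p * (y * y) -> - (r / 2 * (y * y)) <= g * y.
Proof.
move=> r0 p0 h1 h2.
have h3 : 4 * (g * g) <= r * r * (y * y) by apply: (Rmult_le_reg_l p) => //; nra.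
have h4 : Rabs (2 * g) <= Rabs (r * y) by apply: Rsqr_le_abs_0; rewrite /Rsqr; nra.
rewrite !Rabs_mult (Rabs_right 2) ?(Rabs_right r) in h4; try lra.
have ey : y * y = Rabs y * Rabs y by rewrite -Rabs_mult Rabs_right //; nra.
have := Rle_abs (- (g * y)); rewrite Rabs_Ropp Rabs_mult ey; have := Rabs_pos y; nra.
Qed.

Definition sqmass {d} (A : {set 'I_d}) (x : vec d) : R :=
  \big[Rplus/0]_(j < d) (if j \in A then x j * x j else 0).

Lemma sqmass_sub {d} (A B : {set 'I_d}) x : A \subset B -> sqmass A x <= sqmass B x.
Proof.
move=> /subsetP AB; apply: rsum_le => j.
case: ifP => [/AB -> | _]; first lra; case: ifP => _; nra.
Qed.

Definition restrict {d} (x : vec d) (F : {set 'I_d}) : vec d :=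
  fun j => if j \in F then x j else 0.

(* Restricted strong convexity at sparsity level [s] compares a restricted
   minimiser [b] (support [F]) with the sparse optimum [bb] (support [Fb]).
   Both gradients vanish on their supports, which turns the inequalities into
   coordinatewise estimates on the symmetric difference of [F] and [Fb]. *)
Section SupportGrowth.
Context {d : nat} {Q : vec d -> R} {grad : vec d -> vec d} {s : nat} {rms rps : R}.
Hypothesis HRs : RSC Q grad s rms rps.
Context {bb : vec d} {Fb : {set 'I_d}}.
Hypotheses (bb_supp : supported bb Fb) (bb_grad0 : forall j, j \in Fb -> grad bb j = 0).

Lemma missed_mass_bound {b F G} :
  supported b F -> (forall j, j \in F -> grad b j = 0) ->
  (forall j, j \notin F -> grad b j * grad b j <= 2 * G) ->
  (forall j, j \in F -> - (rms / 2 * (b j * b j)) <= grad bb j * b j) ->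
  (#|F :|: Fb| <= s)%N ->
  rms * rms / 2 * sqmass (Fb :\: F) bb <= INR #|Fb :\: F| * G.
Proof.
move=> b_supp b_grad0 gain cross card.
have [rms0 [_ HRsb]] := HRs.
have card' : (#|Fb :|: F| <= s)%N by rewrite setUC.
have [rA _] := HRsb b bb (leq_trans (l0_vsub bb_supp b_supp) card').
have [rB _] := HRsb bb b (leq_trans (l0_vsub b_supp bb_supp) card).
(* [T j] is the [j]-th term of the sum of the RSC inequalities between [b] and [bb]. *)
pose T j := rms / 2 * (vsub bb b j * vsub bb b j) + rms / 2 * (vsub b bb j * vsub b bb j)
      + grad b j * vsub bb b j + grad bb j * vsub b bb j.
have sumT : \big[Rplus/0]_(j < d) T j <= 0.
  by rewrite /T !rsumD !rsumZ; rewrite /sqnorm /inner in rA rB; lra.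
have pointwise j : rms * rms / 2 * (if j \in Fb :\: F then bb j * bb j else 0)
                   - (if j \in Fb :\: F then G else 0) <= rms * T j.
  rewrite /T /vsub inE.
  have sq := Rle_0_sqr (bb j - b j); have sq' := Rle_0_sqr (b j - bb j); rewrite /Rsqr in sq sq'.
  case: (boolP (j \in F)) => jF; case: (boolP (j \in Fb)) => jFb /=.
  - by rewrite b_grad0 // bb_grad0 //; nra.
  - by rewrite b_grad0 // bb_supp //; have := cross j jF; nra.
  - rewrite b_supp // bb_grad0 //; have := gain j jF.
    by have := Rle_0_sqr (rms * bb j + grad b j); rewrite /Rsqr; nra.
  - by rewrite b_supp // bb_supp //; nra.
have := rsum_le pointwise; rewrite rsumB rsumZ rsum_indicator rsumZ -/(sqmass _ _).
have := Rmult_le_compat_l rms _ _ (Rlt_le _ _ rms0) sumT; lra.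
Qed.

(* Conversely each coordinate of [F' \ Fb] carries at least [dl/rho_+(1)] of
   squared mass in [b'] (compare [b'] with the restriction of [bb] to [F']);
   their number is paid for by the mass of [bb] that [F'] misses, weighted by
   [rps - rms]. *)
Lemma new_mass_bound {b' F' dl rp1} : 0 < rp1 ->
  supported b' F' -> (forall j, j \in F' -> grad b' j = 0) ->
  (forall j, j \in F' -> dl <= rp1 * (b' j * b' j)) ->
  (forall j, j \in F' -> - (rms / 2 * (b' j * b' j)) <= grad bb j * b' j) ->
  (#|F' :|: Fb| <= s)%N ->
  INR #|F' :\: Fb| * (rms / 2 * dl) <= rp1 * (rps - rms) / 2 * sqmass (Fb :\: F') bb.
Proof.
move=> rp10 b'_supp b'_grad0 large cross card.
have [rms0 [_ HRsb]] := HRs.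
pose y := restrict bb F'.
have y_supp : supported y F' by move=> j jF; rewrite /y /restrict (negbTE jF).
have y_suppb : supported y Fb by move=> j jFb; rewrite /y /restrict bb_supp //; case: ifP.
have cardF' : (#|F' :|: F'| <= s)%N.
  by rewrite setUid; apply: leq_trans card; apply/subset_leq_card/subsetUl.
have cardFb : (#|Fb :|: Fb| <= s)%N.
  by rewrite setUid; apply: leq_trans card; apply/subset_leq_card/subsetUr.
have [r1 _] := HRsb b' y (leq_trans (l0_vsub y_supp b'_supp) cardF').
have [_ r2] := HRsb bb y (leq_trans (l0_vsub y_suppb bb_supp) cardFb).
have [r3 _] := HRsb bb b' (leq_trans (l0_vsub b'_supp bb_supp) card).
(* [T j] is the [j]-th term of the sum of the three RSC inequalities. *)
pose T j := rms / 2 * (vsub y b' j * vsub y b' j) + rms / 2 * (vsub b' bb j * vsub b' bb j)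
      + (- (rps / 2)) * (vsub y bb j * vsub y bb j) + grad b' j * vsub y b' j
      + (-1) * (grad bb j * vsub y bb j) + grad bb j * vsub b' bb j.
have sumT : \big[Rplus/0]_(j < d) T j <= 0.
  by rewrite /T !rsumD !rsumZ; rewrite /sqnorm /inner in r1 r2 r3; lra.
have pointwise j : (if j \in F' :\: Fb then rms / 2 * dl else 0)
    - rp1 * (rps - rms) / 2 * (if j \in Fb :\: F' then bb j * bb j else 0) <= rp1 * T j.
  rewrite /T /vsub /y /restrict !inE.
  case: (boolP (j \in F')) => jF; case: (boolP (j \in Fb)) => jFb /=.
  - rewrite b'_grad0 // bb_grad0 //.
    have := Rmult_le_pos _ _ (Rlt_le _ _ (Rmult_lt_0_compat _ _ rp10 rms0))
      (Rle_0_sqr (bb j - b' j)); rewrite /Rsqr; nra.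
  - rewrite b'_grad0 // bb_supp //; have := cross j jF; have := large j jF; nra.
  - by rewrite bb_grad0 // b'_supp //; nra.
  - by rewrite b'_supp // bb_supp //; nra.
have := rsum_le pointwise; rewrite rsumB rsum_indicator rsumZ -/(sqmass _ _).
have := Rmult_le_compat_l rp1 _ _ (Rlt_le _ _ rp10) sumT; rewrite rsumZ; lra.
Qed.

End SupportGrowth.

Lemma mass_elimination {a m S S' dl rms rps rp1} :
  0 < rms -> 0 < rp1 -> rms <= rps -> 0 < dl -> S' <= S ->
  rms * rms / 2 * S <= m * (rp1 * dl) -> a * (rms / 2 * dl) <= rp1 * (rps - rms) / 2 * S' ->
  a * (rms * rms * rms) <= 2 * m * (rp1 * rp1) * (rps - rms).
Proof.
move=> rms0 rp10 rmsps dl0 SS' hA hB.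
have c0 : 0 <= rp1 * (rps - rms) by nra.
have hB' : a * (rms / 2 * dl) <= rp1 * (rps - rms) / 2 * S by nra.
apply: (Rmult_le_reg_r dl) => //.
have h1 : a * (rms / 2 * dl) * (rms * rms) <= rp1 * (rps - rms) / 2 * S * (rms * rms).
  by apply: Rmult_le_compat_r => //; nra.
have h2 : rp1 * (rps - rms) * (rms * rms / 2 * S) <= rp1 * (rps - rms) * (m * (rp1 * dl)).
  exact: Rmult_le_compat_l.
have e1 : a * (rms * rms * rms) * dl = 2 * (a * (rms / 2 * dl) * (rms * rms)) by field.
have e2 : rp1 * (rps - rms) / 2 * S * (rms * rms) = rp1 * (rps - rms) * (rms * rms / 2 * S).
  by field.
rewrite e1; lra.
Qed.

Lemma sparsity_budget {a m kb fp s rms rps rp1} :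
  0 < rms -> rms <= rps -> rms <= rp1 -> 0 <= a -> 0 <= m <= kb ->
  a * (rms * rms * rms) <= 2 * m * (rp1 * rp1) * (rps - rms) -> fp <= kb + a ->
  s - kb > (kb + 1) * ((sqrt (rps / rms) + 1) * (2 * rp1 / rms)) ^ 2 -> fp + kb < s.
Proof.
move=> rms0 rmsps rms1 a0 hm hA hfp hs.
set r := rp1 / rms; set x := rps / rms; set sx := sqrt x.
rewrite -/x -/sx in hs.
have er : rp1 = r * rms by rewrite /r; field; lra.
have ex : rps = x * rms by rewrite /x; field; lra.
have r1 : 1 <= r by apply: (Rmult_le_reg_r rms) => //; rewrite -er; lra.
have x1 : 1 <= x by apply: (Rmult_le_reg_r rms) => //; rewrite -ex; lra.
have hsx : sx * sx = x by apply: sqrt_sqrt; lra.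
have sx0 : 0 <= sx := sqrt_pos x.
have ha : a <= 2 * kb * (r * r) * (x - 1).
  have ha2 : a <= 2 * m * (r * r) * (x - 1).
    rewrite er ex in hA; apply: (Rmult_le_reg_r (rms * rms * rms)).
      by repeat apply: Rmult_lt_0_compat.
    have -> : 2 * m * (r * r) * (x - 1) * (rms * rms * rms)
            = 2 * m * (r * rms * (r * rms)) * (x * rms - rms) by ring.
    lra.
  have rx : 0 <= (r * r) * (x - 1) by nra.
  by apply: Rle_trans ha2 _; nra.
have hc : ((sx + 1) * (2 * rp1 / rms)) ^ 2 >= 4 * (r * r) * (x + 1).
  have -> : ((sx + 1) * (2 * rp1 / rms)) ^ 2 = 4 * (r * r) * (sx * sx + 2 * sx + 1).
    by rewrite /r; field; lra.
  rewrite hsx; nra.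
have hc2 : 4 * (r * r) * (x + 1) >= 1 + 2 * (r * r) * (x - 1) by nra.
have hkb : 0 <= kb + 1 by lra.
have rx : 0 <= (r * r) * (x - 1) by nra.
have := Rmult_le_compat_l (kb + 1) _ _ hkb (Rge_le _ _ (Rge_trans _ _ _ hc hc2)).
lra.
Qed.

(* The potential
   [Q(beta) + (sum of recorded gains)/2] decreases along the algorithm. *)
Definition well_formed {d} (Q : vec d -> R) (delta : R) (st : state d) : Prop :=
  is_hat Q (stF st) (stbeta st) /\ size (stds st) = #|stF st| /\
  List.Forall (fun x => delta <= x) (stds st).

Definition backward_done {d} (Q : vec d -> R) (st : state d) : Prop :=
  stF st = set0 \/
  forall i, i \in stF st -> Qdrop Q (stbeta st) i - Q (stbeta st) >= head 0 (stds st) / 2.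

Definition sumR (l : seq R) : R := foldr Rplus 0 l.

Definition potential {d} (Q : vec d -> R) (st : state d) : R :=
  Q (stbeta st) + sumR (stds st) / 2.

Lemma head_ge {d} {Q : vec d -> R} {delta st} j :
  well_formed Q delta st -> j \in stF st -> delta <= head 0 (stds st).
Proof.
case=> _ []; case: (stds st) => [|x ds] /= hsize hds jF; last by inversion hds.
have : (0 < #|stF st|)%N by apply/card_gt0P; exists j.
by rewrite -hsize.
Qed.

Lemma potential_lower_bound {d} {Q : vec d -> R} {delta st bmin} :
  delta > 0 -> is_hat Q setT bmin -> well_formed Q delta st -> Q bmin <= potential Q st.
Proof.
move=> delta0 Hmin [_ [_ hds]].
have hsum : 0 <= sumR (stds st).
  by elim: hds => [|x l hx _ IH] /=; lra.
have : Q bmin <= Q (stbeta st) by apply: (hat_min Hmin) => j; rewrite inE.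
rewrite /potential; lra.
Qed.

(* Each removal in the backward loop lowers the potential: the removed
   coordinate costs less than half of the last recorded gain, which is
   dropped from the record. *)
Lemma backward_loop {d} {Q : vec d -> R} {delta st1 st2} :
  bwd Q st1 st2 -> well_formed Q delta st1 ->
  [/\ well_formed Q delta st2, backward_done Q st2,
      st2 = st1 \/ (#|stF st2| < #|stF st1|)%N & potential Q st2 <= potential Q st1].
Proof.
elim=> [st exit | st st' st'' j _ [i [iF hi]] jF jmin hF' hhat' hds' _ IH] wf.
  by split => //; [left | lra].
case: wf => Hb [hsize hds].
have hcard : #|stF st| = (#|stF st'|).+1 by rewrite hF' (cardsD1 j (stF st)) jF.
move: hsize hds hi; rewrite hF' in hhat' hcard; case E: (stds st) => [|h t] //=.
  by rewrite hcard.
move=> hsize hds hi; inversion hds; subst.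
have wf' : well_formed Q delta st'.
  rewrite /well_formed hds' E hF' /=; split=> //; split=> //.
  by move: hsize; rewrite hcard => [[]].
have [wf'' exit'' card'' pot''] := IH wf'.
split => //.
  by right; rewrite hcard -hF'; case: card'' => [->|lt] //; exact: ltnW.
have hq : Q (stbeta st') <= Qdrop Q (stbeta st) j.
  exact: (hat_min hhat' (drop_supported (hat_supported Hb) j)).
have := jmin i iF; move: pot''; rewrite /potential hds' E /=; lra.
Qed.

Lemma not_stopped_gain {d} {Q : vec d -> R} {delta st i ai} :
  ~ stop_obj Q delta st -> i \notin stF st ->
  (forall j a, j \notin stF st -> Q (plus_coord (stbeta st) ai i) <= Q (plus_coord (stbeta st) a j)) ->
  delta <= Q (stbeta st) - Q (plus_coord (stbeta st) ai i).
Proof.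
move=> nstop iF opt; apply: Rnot_lt_le => h; apply: nstop; right.
by exists i, ai.
Qed.

Definition within_budget {d} (Q : vec d -> R) (delta : R) (kb s : nat) (st : state d) : Prop :=
  well_formed Q delta st /\ backward_done Q st /\ (#|stF st| + kb < s)%N.

(* Testing the RSC inequalities on a coordinate move orders the constants. *)
Lemma rsc_constants_order {d} {Q : vec d -> R} {grad s rms rps rm1 rp1} (i : 'I_d) :
  (0 < s)%N -> RSC Q grad s rms rps -> RSC Q grad 1 rm1 rp1 -> rms <= rps /\ rms <= rp1.
Proof.
move=> s0 [_ [_ HRs]] [_ [_ HR1]]; pose b := @vzero d.
have [h1 h2] := HRs b _ (leq_trans (l0_coord b 1 i) s0).
have [_ h3] := HR1 b _ (l0_coord b 1 i).
by rewrite sqnorm_coord in h1 h2 h3; split; lra.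
Qed.

Section Iteration.
Context {d : nat} {Q : vec d -> R} {grad : vec d -> vec d} {bb : vec d}.
Context {s : nat} {rms rps rm1 rp1 delta : R}.
Hypotheses (Hbar : forall b : vec d, (l0 b <= l0 bb)%N -> Q bb <= Q b) (Hs : (0 < s)%N).
Hypotheses (HRs : RSC Q grad s rms rps) (HR1 : RSC Q grad 1 rm1 rp1).
Hypothesis Hsk : INR s - INR (l0 bb) >
  (INR (l0 bb) + 1) * ((sqrt (rps / rms) + 1) * (2 * rp1 / rms)) ^ 2.
Hypothesis Hdelta0 : delta > 0.
Hypothesis Hdelta : delta > 4 * rp1 / rms ^ 2 * (infnorm (grad bb)) ^ 2.

Lemma grad_bar_small j : 4 * (grad bb j * grad bb j) * rp1 < rms * rms * delta.
Proof.
have [rms0 _] := HRs; have [_ [rp10 _]] := HR1.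
have h1 := infnorm_ge (grad bb) j; have h0 := Rabs_pos (grad bb j).
have h2 : grad bb j * grad bb j <= infnorm (grad bb) ^ 2.
  have -> : grad bb j * grad bb j = Rabs (grad bb j) * Rabs (grad bb j).
    by rewrite -Rabs_mult Rabs_right //; nra.
  by simpl; nra.
have e : 4 * rp1 / rms ^ 2 * infnorm (grad bb) ^ 2 * (rms * rms)
         = 4 * rp1 * infnorm (grad bb) ^ 2 by field; lra.
have : 4 * rp1 * infnorm (grad bb) ^ 2 < delta * (rms * rms).
  by rewrite -e; apply: Rmult_lt_compat_r => //; nra.
nra.
Qed.

(* Comparing [b] and [b'] with the
   sparse optimum [bb] shows that the support stays within budget. *)
Lemma forward_within_budget {F b b' i ai} :
  is_hat Q F b -> (forall j, j \in F -> delta <= rp1 * (b j * b j)) ->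
  i \notin F -> (forall j a, j \notin F -> Q (plus_coord b ai i) <= Q (plus_coord b a j)) ->
  delta <= Q b - Q (plus_coord b ai i) ->
  is_hat Q (i |: F) b' -> (forall j, j \in i |: F -> Q b - Q b' <= rp1 * (b' j * b' j)) ->
  (#|F| + l0 bb < s)%N -> (#|i |: F| + l0 bb < s)%N.
Proof.
move=> Hb b_large iF ai_opt gain Hb' b'_large card.
have [rms0 _] := HRs; have [_ [rp10 _]] := HR1.
have [rmsps rms1] := rsc_constants_order i Hs HRs HR1.
set F' := i |: F; set Fb := supp bb; set dl := Q b - Q b'.
have b_supp := hat_supported Hb; have b'_supp := hat_supported Hb'.
have b'_le : Q b' <= Q (plus_coord b ai i).
  exact: hat_min Hb' (plus_coord_supported b_supp ai i).
have hdl : delta <= dl by rewrite /dl; lra.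
have gain_grad j : j \notin F -> grad b j * grad b j <= 2 * (rp1 * dl).
  move=> jF; rewrite -Rmult_assoc; apply: (coord_gain_bound HR1) => t.
  by have := ai_opt j t jF; rewrite /dl; lra.
have cross_b j : j \in F -> - (rms / 2 * (b j * b j)) <= grad bb j * b j.
  by move=> jF; apply: (cross_bound rms0 rp10 (grad_bar_small j) (b_large j jF)).
have cross_b' j : j \in F' -> - (rms / 2 * (b' j * b' j)) <= grad bb j * b' j.
  move=> jF; apply: (cross_bound rms0 rp10 (grad_bar_small j)).
  exact: Rle_trans hdl (b'_large j jF).
have bb_grad0 := sparse_opt_grad0 HR1 Hbar.
have cardF : (#|F :|: Fb| <= s)%N.
  by apply: leq_trans (leq_card_setU F Fb).1 _; apply: ltnW.
have cardF' : (#|F' :|: Fb| <= s)%N.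
  by apply: leq_trans (leq_card_setU F' Fb).1 _; rewrite cardsU1 iF.
have massA := missed_mass_bound HRs (supported_supp bb) bb_grad0 b_supp (hat_grad0 HR1 Hb)
                gain_grad cross_b cardF.
have massB := new_mass_bound HRs (supported_supp bb) bb_grad0 rp10 b'_supp (hat_grad0 HR1 Hb')
                b'_large cross_b' cardF'.
have mass_sub : sqmass (Fb :\: F') bb <= sqmass (Fb :\: F) bb.
  by apply: sqmass_sub; apply: setDS; apply: subsetUr.
have growth := mass_elimination rms0 rp10 rmsps (Rlt_le_trans _ _ _ Hdelta0 hdl)
                 mass_sub massA massB.
have missed_le : INR #|Fb :\: F| <= INR (l0 bb).
  by apply/le_INR/leP/subset_leq_card/subsetDl.
have new_le : INR #|F'| <= INR (l0 bb) + INR #|F' :\: Fb|.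
  rewrite -plus_INR; apply/le_INR/leP.
  by rewrite -(cardsID Fb F') leq_add2r; apply/subset_leq_card/subsetIr.
apply/ltP/INR_lt; rewrite plus_INR.
exact: sparsity_budget rms0 rmsps rms1 (pos_INR _) (conj (pos_INR _) missed_le)
         growth new_le Hsk.
Qed.

Lemma done_coords_large {st} :
  is_hat Q (stF st) (stbeta st) -> backward_done Q st ->
  forall j, j \in stF st -> head 0 (stds st) <= rp1 * (stbeta st j * stbeta st j).
Proof.
move=> Hb [E|exit] j jF; first by rewrite E inE in jF.
exact: (costly_drop_large HR1 Hb jF (exit j jF)).
Qed.

(* If the backward loop removes something
   the support does not grow; otherwise [forward_within_budget] applies. *)
Lemma iteration_progress st st'' :
  within_budget Q delta (l0 bb) s st -> ~ stop_obj Q delta st -> iter_obj Q st st'' ->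
  within_budget Q delta (l0 bb) s st'' /\ potential Q st'' <= potential Q st - delta / 2.
Proof.
move=> [wf [exit card]] nstop [st' [[i [ai [iF [opt [hF' [Hb' hds']]]]]] hbwd]].
have gain := not_stopped_gain nstop iF opt.
have [Hb [hsize hds]] := wf.
have b'_le : Q (stbeta st') <= Q (plus_coord (stbeta st) ai i).
  by apply: (hat_min Hb'); rewrite hF'; apply: plus_coord_supported (hat_supported Hb) ai i.
have wf' : well_formed Q delta st'.
  split=> //; rewrite hds' hF' cardsU1 iF /= hsize; split=> //; constructor=> //; lra.
have pot' : potential Q st' <= potential Q st - delta / 2 by rewrite /potential hds' /=; lra.
have [wf'' exit'' [same|shrunk] pot''] := backward_loop hbwd wf'; split; try lra; split=> //.
- subst st''; split=> //; rewrite hF'.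
  apply: (forward_within_budget (b' := stbeta st') Hb _ iF opt gain) => // [j jF||].
  + exact: (Rle_trans _ _ _ (head_ge j wf jF) (done_coords_large Hb exit j jF)).
  + by rewrite -hF'.
  + move=> j jF; rewrite -hF' in jF.
    by have := done_coords_large Hb' exit'' j jF; rewrite hds'.
- by split=> //; move: shrunk card; rewrite hF' cardsU1 iF; lia.
Qed.

End Iteration.

Lemma init_well_formed {d} (Q : vec d -> R) delta : well_formed Q delta (init_state d).
Proof.
split; last by split; [rewrite cards0 | constructor].
split=> [j _ //|b' hb']; have -> : b' = @vzero d; last exact: Rle_refl.
by apply: functional_extensionality => j; apply: hb'; rewrite inE.
Qed.

Lemma first_stop {d} {Q : vec d -> R} {delta tr} (Inv : state d -> Prop) (lb : R) :
  delta > 0 -> foba_obj_run Q delta tr -> Inv (tr 0%N) ->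
  (forall st st', Inv st -> ~ stop_obj Q delta st -> iter_obj Q st st' ->
     Inv st' /\ potential Q st' <= potential Q st - delta / 2) ->
  (forall st, Inv st -> lb <= potential Q st) ->
  exists t, [/\ stop_obj Q delta (tr t),
                forall t', (t' < t)%N -> ~ stop_obj Q delta (tr t') & Inv (tr t)].
Proof.
move=> delta0 [_ Hnext] Hinit Hstep Hlb.
have descent t : (forall t', (t' < t)%N -> ~ stop_obj Q delta (tr t')) ->
    Inv (tr t) /\ potential Q (tr t) <= potential Q (tr 0%N) - INR t * (delta / 2).
  elim: t => [|t IH] running; first by split=> //=; lra.
  have [Inv_t pot_t] := IH (fun t' lt => running t' (ltnW lt)).
  have nstop : ~ stop_obj Q delta (tr t) by apply: running.
  have [Inv_t1 pot_t1] := Hstep _ _ Inv_t nstop (Hnext t nstop).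
  by split=> //; rewrite S_INR; lra.
have [t0 stop0] : exists t, stop_obj Q delta (tr t).
  apply: NNPP => never.
  have [n hn] := INR_archimed (delta / 2) (potential Q (tr 0%N) - lb) ltac:(lra).
  have [Inv_n pot_n] := descent n (fun t' _ stop => never (ex_intro _ t' stop)).
  by have := Hlb _ Inv_n; lra.
have [t [[stop_t first_t] _]] := dec_inh_nat_subset_has_unique_least_element
  (fun t => stop_obj Q delta (tr t)) (fun t => classic _) (ex_intro _ t0 stop0).
have before t' : (t' < t)%N -> ~ stop_obj Q delta (tr t').
  by move=> lt stop'; have := first_t t' stop'; move/ltP: lt; lia.
by exists t; split=> //; case: (descent t before).
Qed.

Theorem theorem1 (d : nat) (Q : vec d -> R) (grad : vec d -> vec d)
  (HQconv : convex Q) (HQC1 : is_C1_with_grad Q grad)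
  (Hhat : forall F : {set 'I_d}, exists b : vec d, is_hat Q F b)
  (betabar : vec d)
  (Hbar : forall b : vec d, (l0 b <= l0 betabar)%N -> Q betabar <= Q b)
  (s : nat) (Hs : (0 < s)%N)
  (rms rps rm1 rp1 : R)
  (HRs : RSC Q grad s rms rps) (HR1 : RSC Q grad 1 rm1 rp1)
  (Hsk : INR s - INR (l0 betabar) >
         (INR (l0 betabar) + 1) *
         ((sqrt (rps / rms) + 1) * (2 * rp1 / rms)) ^ 2)
  (delta : R) (Hdelta0 : delta > 0)
  (Hdelta : delta > 4 * rp1 / rms ^ 2 * (infnorm (grad betabar)) ^ 2)
  (tr : nat -> state d) (Hrun : foba_obj_run Q delta tr) :
  exists t : nat,
    stop_obj Q delta (tr t) /\
    (forall t' : nat, (t' < t)%N -> ~ stop_obj Q delta (tr t')) /\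
    (#|stF (tr t)| <= s - l0 betabar)%N.
Proof.
have [bmin Hmin] := Hhat setT.
(* The hypothesis on [s] forces [kb < s], so the empty start is within budget. *)
have kb_lt_s : (0 + l0 betabar < s)%N.
  apply/ltP/INR_lt; rewrite plus_INR /=.
  have : 0 <= (INR (l0 betabar) + 1) * ((sqrt (rps / rms) + 1) * (2 * rp1 / rms)) ^ 2.
    by apply: Rmult_le_pos; [have := pos_INR (l0 betabar); lra | apply: pow2_ge_0].
  lra.
have init : within_budget Q delta (l0 betabar) s (tr 0%N).
  by case: Hrun => -> _; split; [exact: init_well_formed | split; [left | rewrite cards0]].
have [t [stop_t first_t [_ [_ budget]]]] := first_stop
  (within_budget Q delta (l0 betabar) s) (Q bmin) Hdelta0 Hrun init
  (iteration_progress Hbar Hs HRs HR1 Hsk Hdelta0 Hdelta)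
  (fun st inv => potential_lower_bound Hdelta0 Hmin inv.1).
by exists t; split=> //; split=> //; move: budget; lia.
Qed.
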